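(* Assume the setting described in the context. Consider Algorithm 2 with a deterministic rule for choosing $f$ in each inner iteration, and let $s\ge1$. Then: (a) for every $\tau\in\mathrm{BadPar}(s)$ the longest chain of $\tau$ has length exactly $s$; (b) the set $\mathrm{BadPar}(s)$ is valid.
   Context: Setting: $\Omega$ is a finite set and $F$ a finite set of flaws, each a nonempty subset of $\Omega$; $F_\sigma=\{f:\sigma\in f\}$. For $\sigma\in\Omega$ and $f\in F_\sigma$ there is a probability distribution $\rho(\cdot\mid f,\sigma)$ with support $A(f,\sigma)$. A walk is $\sigma_1\xrightarrow{w_1}\sigma_2\cdots\xrightarrow{w_t}\sigma_{t+1}$ with $w_i\in F_{\sigma_i}$ and $\sigma_{i+1}\in A(w_i,\sigma_i)$, with word $w_1\ldots w_t$. $\sim$ is a symmetric relation on $F$ (loops allowed), with $\Gamma(f)=\{g:f\sim g\}$, $\Gamma^+(f)=\Gamma(f)\cup\{f\}$ and $\Gamma^+(S)=\bigcup_{f\in S}\Gamma^+(f)$. It is assumed that for every step $\sigma\xrightarrow{f}\sigma'$, $F_{\sigma'}\subseteq(F_\sigma\setminus\{f\})\cup\Gamma(f)$. Write $f\cong g$ if $f\sim g$ or $f=g$. Algorithm 2 (with initial distribution $\omega^{\mathrm{init}}$). Sample $\sigma$ from $\omega^{\mathrm{init}}$. While $F_\sigma\neq\varnothing$, perform a round: $I:=\varnothing$; while $F_\sigma\setminus\Gamma^+(I)\ne\varnothing$, pick $f\in F_\sigma\setminus\Gamma^+(I)$ by the deterministic rule, sample $\sigma'$ from $\rho(\cdot\mid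 f,\sigma)$, set $\sigma\leftarrow\sigma'$ and $I\leftarrow I\cup\{f\}$. $\mathrm{BadPar}(s)$: for each execution (with positive probability) having at least $s$ rounds, take the walk consisting of all steps of the first $s-1$ rounds followed by the first step of round $s$. $\mathrm{BadPar}(s)$ is the set of all such walks. A chain of a walk with word $w_1\ldots w_t$ is a subsequence $u_1\ldots u_m$ of $w_1\ldots w_t$ with $u_i\cong u_{i+1}$ for $i\in[m-1]$; its length is $m$. A deterministic strategy assigns to each walk whose last state $\sigma$ is flawed a flaw in $F_\sigma$; a walk follows it if each $w_i$ is the flaw assigned to the prefix ending at $\sigma_i$. A set of walks is valid if all its walks follow one common deterministic strategy and no walk in it is a proper prefix (a different initial segment) of another walk in it. *)

From mathcomp Require Import all_boot all_order all_algebra.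
Set Implicit Arguments. Unset Strict Implicit. Unset Printing Implicit Defensive.
Import Order.TTheory GRing.Theory Num.Theory.
Local Open Scope ring_scope.

(* A walk sigma_1 -w_1-> sigma_2 ... -w_t-> sigma_{t+1} is represented by its
   initial state sigma_1 and the sequence of steps [:: (w_1, sigma_2); ...]. *)
Definition walkT (Omega : finType) := (Omega * seq ({set Omega} * Omega))%type.

Section Defs.
Variable Omega : finType.
Variable F : {set {set Omega}}.
Variable sim : rel {set Omega}.

Definition Fs (sigma : Omega) : {set {set Omega}} := [set f in F | sigma \in f].
Definition Gam (f : {set Omega}) : {set {set Omega}} := [set g in F | sim f g].
Definition Gamp (f : {set Omega}) : {set {set Omega}} := f |: Gam f.
Definition GampS (S : {set {set Omega}}) : {set {set Omega}} :=
  \bigcup_(f in S) Gamp f.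
Definition cong (f g : {set Omega}) : bool := sim f g || (f == g).

Definition lastst (s1 : Omega) (h : seq ({set Omega} * Omega)) : Omega :=
  last s1 [seq p.2 | p <- h].
Definition word (h : seq ({set Omega} * Omega)) : seq {set Omega} :=
  [seq p.1 | p <- h].

Definition is_chain_of (h : seq ({set Omega} * Omega)) (u : seq {set Omega}) :=
  subseq u (word h) /\ sorted cong u.
Definition longest_chain_len (h : seq ({set Omega} * Omega)) (n : nat) :=
  (exists u, is_chain_of h u /\ size u = n) /\
  (forall u, is_chain_of h u -> (size u <= n)%N).

Variable R : realFieldType.
Variable rho : {set Omega} -> Omega -> Omega -> R.  (* rho(sigma' | f, sigma) *)

Definition supp (f : {set Omega}) (sigma : Omega) : {set Omega} :=
  [set s' | 0 < rho f sigma s'].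

Fixpoint walk_from (s : Omega) (h : seq ({set Omega} * Omega)) : bool :=
  match h with
  | [::] => true
  | (f, s') :: h' => [&& f \in Fs s, s' \in supp f s & walk_from s' h']
  end.

Definition is_strategy (strat : Omega -> seq ({set Omega} * Omega) -> {set Omega}) :=
  forall s1 h, walk_from s1 h -> Fs (lastst s1 h) != set0 ->
    strat s1 h \in Fs (lastst s1 h).
Definition follows (strat : Omega -> seq ({set Omega} * Omega) -> {set Omega})
    (s1 : Omega) (h : seq ({set Omega} * Omega)) :=
  forall i, (i < size h)%N -> (nth (set0, s1) h i).1 = strat s1 (take i h).
Definition valid (W : walkT Omega -> Prop) :=
  exists strat, is_strategy strat /\
    (forall tau, W tau -> walk_from tau.1 tau.2 /\ follows strat tau.1 tau.2) /\
    (forall tau1 tau2, W tau1 -> W tau2 -> tau1.1 = tau2.1 ->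
        prefix tau1.2 tau2.2 -> tau1.2 = tau2.2).

(* Algorithm 2.  [rule s1 h I] is the deterministic choice of f made when the
   execution so far is the walk (s1, h) and the current set is I. *)
Variable omega : Omega -> R.
Variable rule : Omega -> seq ({set Omega} * Omega) -> {set {set Omega}} -> {set Omega}.

(* reach s1 h k I b : there is a positive-probability execution prefix whose
   steps form the walk (s1, h), during which k rounds have been started, whose
   current set is I, and b = true iff the last step is the first step of round k. *)
Inductive reach : Omega -> seq ({set Omega} * Omega) -> nat -> {set {set Omega}} -> bool -> Prop :=
| reach_init s1 : 0 < omega s1 -> reach s1 [::] 0 set0 false
| reach_new s1 h k I b f s' :
    reach s1 h k I b ->
    (k == 0)%N || (Fs (lastst s1 h) :\: GampS I == set0) ->
    Fs (lastst s1 h) != set0 ->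
    f = rule s1 h set0 ->
    0 < rho f (lastst s1 h) s' ->
    reach s1 (rcons h (f, s')) k.+1 [set f] true
| reach_inner s1 h k I b f s' :
    reach s1 h k I b ->
    (0 < k)%N ->
    Fs (lastst s1 h) :\: GampS I != set0 ->
    f = rule s1 h I ->
    0 < rho f (lastst s1 h) s' ->
    reach s1 (rcons h (f, s')) k (f |: I) false.

(* BadPar(s): steps of the first s-1 rounds followed by the first step of round s *)
Definition BadPar (s : nat) (tau : walkT Omega) : Prop :=
  exists I, reach tau.1 tau.2 s I true.

End Defs.

From mathcomp Require Import all_boot all_order all_algebra.
Local Open Scope ring_scope.
Set Implicit Arguments. Unset Strict Implicit.

(* During round k the algorithm maintains two invariants on the word w of the
   walk so far and the set I of flaws addressed in the current round:
   every chain of w has length at most k, with the chains of length k ending in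
   I; and every flaw of I ends a chain of length k, while every flaw of the
   current state outside Gamma^+(I) extends a chain of length k - 1.  A flaw
   addressed in round k is never related to a flaw addressed earlier in the same
   round, so it cannot lengthen a chain of length k; when round k+1 starts, every
   present flaw lies in Gamma^+(I) and so extends a chain of length k, and the
   step hypothesis F_sigma' <= (F_sigma \ f) u Gamma(f) keeps the flaws created
   by a step within reach of such a chain.  The first step of round s thus
   closes a longest chain of length s.  Validity holds because a walk of
   BadPar(s) determines its rounds, and extending it would reach round s + 1. *)

Lemma subseq_rconsE (T : eqType) (u w : seq T) y x :
  subseq (rcons u y) (rcons w x) = subseq (rcons u y) w || (y == x) && subseq u w.
Proof.
rewrite -subseq_rev !rev_rcons /=.
case: eqP => [->|_]; rewrite -?rev_rcons subseq_rev ?orbF //.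
case: (boolP (subseq u w)) => [|uNw]; rewrite ?orbT ?orbF //.
exact/esym/negbTE/(contra (subseq_trans (subseq_rcons u x)) uNw).
Qed.

Lemma sorted_rcons_rcons (T : Type) (r : rel T) u y x :
  sorted r (rcons (rcons u y) x) = sorted r (rcons u y) && r y x.
Proof. by case: u => [|a u] /=; rewrite ?andbT // rcons_path last_rcons. Qed.

Section Algorithm2.
Variables (Omega : finType) (F : {set {set Omega}}) (sim : rel {set Omega}).

Notation Fs := (Fs F).
Notation Gam := (Gam F sim).
Notation Gamp := (Gamp F sim).
Notation GampS := (GampS F sim).
Notation cong := (cong sim).

Lemma mem_Gamp_cong g e : e \in Gamp g -> cong g e.
Proof. by rewrite in_setU1 inE /cong => /orP[/eqP->|/andP[_ ->]]; rewrite ?eqxx ?orbT. Qed.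

Lemma cong_mem_GampS g e (I : {set {set Omega}}) :
  g \in I -> e \in F -> cong g e -> e \in GampS I.
Proof.
move=> gI eF ge; apply/bigcupP; exists g => //.
by move: ge; rewrite /cong in_setU1 inE eF orbC eq_sym => /orP[->|->]; rewrite ?orbT.
Qed.

Lemma GampS_set0 : GampS set0 = set0.
Proof. exact: big_set0. Qed.

Lemma GampS_set1 f : GampS [set f] = Gamp f.
Proof. exact: big_set1. Qed.

Lemma GampS_setU1 f (I : {set {set Omega}}) : GampS (f |: I) = Gamp f :|: GampS I.
Proof. by rewrite /GampS bigcup_setU big_set1. Qed.

Definition new_round (sigma : Omega) (k : nat) (I : {set {set Omega}}) : bool :=
  (k == 0)%N || (Fs sigma :\: GampS I == set0).

Lemma new_roundF sigma k I :
  (0 < k)%N -> Fs sigma :\: GampS I != set0 -> new_round sigma k I = false.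
Proof. by move=> k_gt0 free; rewrite /new_round eqn0Ngt k_gt0 (negbTE free). Qed.

Definition chain_bound (w : seq {set Omega}) (k : nat) (I : {set {set Omega}}) :=
  forall u g, subseq (rcons u g) w -> sorted cong (rcons u g) ->
    (size u < k)%N /\ ((size u).+1 = k -> g \in I).

Definition chain_witness (w : seq {set Omega}) (sigma : Omega) (k : nat)
    (I : {set {set Omega}}) :=
  (forall g, g \in I -> exists2 u,
     subseq (rcons u g) w /\ sorted cong (rcons u g) & size u = k.-1) /\
  (forall e, e \in Fs sigma :\: GampS I -> exists2 u,
     subseq u w /\ sorted cong (rcons u e) & size u = k.-1).

Lemma chain_bound_nil : chain_bound [::] 0 set0.
Proof. by move=> u g; rewrite subseq0 -size_eq0 size_rcons. Qed.

Lemma chain_bound_new w k I f :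
  chain_bound w k I -> chain_bound (rcons w f) k.+1 [set f].
Proof.
move=> bound u g; rewrite subseq_rconsE => /orP[uw|/andP[/eqP-> uw]] ug.
  have [lt_uk _] := bound u g uw ug; split; first exact: ltnW.
  by move=> [eq_uk]; move: lt_uk; rewrite eq_uk ltnn.
split; last by rewrite set11.
case/lastP: u uw ug => [//|u g'] uw ug.
have [lt_uk _] := bound u g' uw (prefix_sorted (prefix_rcons _ _) ug).
by rewrite size_rcons.
Qed.

(* A chain of length k ends in I, and f lies outside Gamma^+(I), so f cannot
   extend it. *)
Lemma chain_bound_inner w k I f : chain_bound w k I -> (0 < k)%N ->
  f \in F -> f \notin GampS I -> chain_bound (rcons w f) k (f |: I).
Proof.
move=> bound k_gt0 fF fNI u g; rewrite subseq_rconsE => /orP[uw|/andP[/eqP-> uw]] ug.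
  have [lt_uk ends_in_I] := bound u g uw ug; split=> // /ends_in_I gI.
  by rewrite setU1r.
split; last by rewrite setU11.
case/lastP: u uw ug => [//|u g'] uw; rewrite sorted_rcons_rcons => /andP[ug' g'f].
have [lt_uk ends_in_I] := bound u g' uw ug'.
rewrite size_rcons ltn_neqAle lt_uk andbT; apply: contraNneq fNI => /ends_in_I g'I.
exact: cong_mem_GampS g'I fF g'f.
Qed.

Lemma chain_witness_nil sigma : chain_witness [::] sigma 0 set0.
Proof. by split=> [g|e _]; rewrite ?inE //; exists [::]. Qed.

(* At the start of a round every present flaw lies in Gamma^+(I), hence extends
   one of the chains of length k ending in I. *)
Lemma chain_witness_new w sigma sigma' k I f :
  chain_witness w sigma k I -> new_round sigma k I -> f \in Fs sigma ->
  Fs sigma' \subset (Fs sigma :\ f) :|: Gam f ->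
  chain_witness (rcons w f) sigma' k.+1 [set f].
Proof.
move=> [ends_in_I extends] new fF step.
have extend e : e \in Fs sigma -> exists2 u,
    subseq u w /\ sorted cong (rcons u e) & size u = k.
  move=> eF; case: k ends_in_I extends new => [|k] ends_in_I _ /= new.
    by exists [::]; rewrite ?sub0seq.
  have : e \notin Fs sigma :\: GampS I by rewrite (eqP new) inE.
  rewrite in_setD eF andbT negbK => /bigcupP[g gI /mem_Gamp_cong ge].
  have [u [uw ug] size_u] := ends_in_I g gI.
  by exists (rcons u g); rewrite ?sorted_rcons_rcons ?ug ?ge ?size_rcons ?size_u.
split=> [g|e].
  rewrite inE => /eqP->; have [u [uw uf] size_u] := extend f fF.
  by exists u; rewrite ?subseq_rconsE ?eqxx ?uw ?orbT.
rewrite GampS_set1 in_setD => /andP[eNf /(subsetP step)].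
rewrite in_setU in_setD1 => /orP[/andP[_ /extend[u [uw ue] size_u]]|eG].
  by exists u => //; split=> //; apply: subseq_trans uw (subseq_rcons _ _).
by rewrite setU1r in eNf.
Qed.

Lemma chain_witness_inner w sigma sigma' k I f :
  chain_witness w sigma k I -> f \in Fs sigma :\: GampS I ->
  Fs sigma' \subset (Fs sigma :\ f) :|: Gam f ->
  chain_witness (rcons w f) sigma' k (f |: I).
Proof.
move=> [ends_in_I extends] fFI step.
split=> [g|e].
  rewrite in_setU1 => /orP[/eqP->|/ends_in_I[u [uw ug] size_u]].
    have [u [uw uf] size_u] := extends f fFI.
    by exists u; rewrite ?subseq_rconsE ?eqxx ?uw ?orbT.
  by exists u => //; split=> //; apply: subseq_trans uw (subseq_rcons _ _).
rewrite GampS_setU1 in_setD in_setU negb_or => /andP[/andP[eNf eNI] /(subsetP step)].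
rewrite in_setU in_setD1 => /orP[/andP[_ eF]|eG]; last by rewrite setU1r in eNf.
have [|u [uw ue] size_u] := extends e; first by rewrite in_setD eNI.
by exists u => //; split=> //; apply: subseq_trans uw (subseq_rcons _ _).
Qed.

Variables (R : realFieldType) (rho : {set Omega} -> Omega -> Omega -> R)
  (omega : Omega -> R)
  (rule : Omega -> seq ({set Omega} * Omega) -> {set {set Omega}} -> {set Omega}).

Notation reach := (reach F sim rho omega rule).
Notation walk_from := (walk_from F rho).

Lemma lastst_rcons s1 h (x : {set Omega} * Omega) : lastst s1 (rcons h x) = x.2.
Proof. by rewrite /lastst map_rcons last_rcons. Qed.

Lemma word_rcons h (x : {set Omega} * Omega) : word (rcons h x) = rcons (word h) x.1.
Proof. exact: map_rcons. Qed.

Lemma walk_from_rcons s1 h f s' :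
  walk_from s1 (rcons h (f, s')) =
  [&& walk_from s1 h, f \in Fs (lastst s1 h) & s' \in supp rho f (lastst s1 h)].
Proof.
by elim: h s1 => [|[f0 s0] h IH] s1 /=; rewrite ?andbT // IH /lastst /= !andbA.
Qed.

Definition round_choice sigma k I : {set {set Omega}} :=
  if new_round sigma k I then set0 else I.

Definition round_step sigma (kI : nat * {set {set Omega}}) f :=
  if new_round sigma kI.1 kI.2 then (kI.1.+1, [set f]) else (kI.1, f |: kI.2).

(* The round counter and the current set I are determined by the walk, so the
   choices of Algorithm 2 form a deterministic strategy. *)
Fixpoint replay sigma kI (h : seq ({set Omega} * Omega)) :=
  if h is (f, s') :: h' then replay s' (round_step sigma kI f) h' else kI.

Definition alg_strategy s1 h :=
  let: (k, J) := replay s1 (0%N, set0) h in rule s1 h (round_choice (lastst s1 h) k J).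

Lemma replay_rcons sigma kI h f s' :
  replay sigma kI (rcons h (f, s')) = round_step (lastst sigma h) (replay sigma kI h) f.
Proof. by elim: h sigma kI => [|[g s0] h IH] sigma kI //=; rewrite IH. Qed.

Lemma reach_replay s1 h k I b : reach s1 h k I b -> replay s1 (0%N, set0) h = (k, I).
Proof.
elim=> {s1 h k I b} // s1 h k I b f s' _ IH.
  by move=> new *; rewrite replay_rcons IH /round_step /new_round /= new.
by move=> k_gt0 free *; rewrite replay_rcons IH /round_step /= new_roundF.
Qed.

Lemma reach_rcons s1 h f s' k I b : reach s1 (rcons h (f, s')) k I b ->
  exists k0 I0 b0, [/\ reach s1 h k0 I0 b0,
    f = rule s1 h (round_choice (lastst s1 h) k0 I0),
    (k, I) = round_step (lastst s1 h) (k0, I0) f & b = new_round (lastst s1 h) k0 I0].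
Proof.
move Ehx: (rcons h _) => hx H; case: H Ehx => [s0 _|s0 h0 k0 I0 b0 f0 s0' H0 new _ Ef _|
    s0 h0 k0 I0 b0 f0 s0' H0 k0_gt0 free Ef _] Ehx.
- by move: Ehx => /(congr1 size); rewrite size_rcons.
- case/rcons_inj: Ehx => -> [-> _]; exists k0, I0, b0.
  rewrite -/(new_round _ _ _) in new.
  by rewrite /round_choice /round_step /= new Ef.
- case/rcons_inj: Ehx => -> [-> _]; exists k0, I0, b0.
  by rewrite /round_choice /round_step /= new_roundF // Ef.
Qed.

Lemma reach_prefix s1 h h' k I b : reach s1 (h ++ h') k I b ->
  exists k0 I0 b0, reach s1 h k0 I0 b0 /\ (k0 <= k)%N.
Proof.
elim/last_ind: h' k I b => [|h' [f s'] IH] k I b; first by rewrite cats0; exists k, I, b.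
rewrite -rcons_cat => /reach_rcons[k1 [I1 [b1 [/IH[k0 [I0 [b0 [H0 le01]]]] _ step _]]]].
exists k0, I0, b0; split=> //; apply: (leq_trans le01).
by move: step; rewrite /round_step; case: ifP => _ [-> _].
Qed.

Lemma reach_first_step_prefix s1 h h' k I I' :
  reach s1 h k I true -> reach s1 (h ++ h') k I' true -> h' = [::].
Proof.
case/lastP: h' => [//|h' [f s']] H; rewrite -rcons_cat.
case/reach_rcons=> k1 [I1 [b1 [/reach_prefix[k0 [I0 [b0 [H0 le01]]]] _ step new]]].
move: step; rewrite /round_step -new /= => -[Ek _].
have := reach_replay H0; rewrite (reach_replay H) => -[Ek0 _].
by move: le01; rewrite -Ek0 Ek ltnn.
Qed.

Lemma reach_follows s1 h k I b : reach s1 h k I b -> follows alg_strategy s1 h.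
Proof.
move=> H i lt_ih; rewrite -(cat_take_drop i.+1 h) (take_nth (set0, s1) lt_ih) in H.
case: (nth (set0, s1) h i) H => f s' /reach_prefix[k0 [I0 [b0 [H _]]]].
by case/reach_rcons: H => k1 [I1 [b1 [H1 -> _ _]]]; rewrite /alg_strategy (reach_replay H1).
Qed.

Lemma reach_set_neq0 s1 h k I b : reach s1 h k I b -> (0 < k)%N -> I != set0.
Proof.
case=> // [s0 h0 k0 I0 b0 f|s0 h0 k0 I0 b0 f] *; apply/set0Pn; exists f.
  exact: set11.
exact: setU11.
Qed.

Hypothesis Fs_step : forall sigma f s', f \in Fs sigma -> s' \in supp rho f sigma ->
  Fs s' \subset (Fs sigma :\ f) :|: Gam f.
Hypothesis rule_free : forall s1 h I,
  Fs (lastst s1 h) :\: GampS I != set0 -> rule s1 h I \in Fs (lastst s1 h) :\: GampS I.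

Lemma rule_set0_mem s1 h : Fs (lastst s1 h) != set0 -> rule s1 h set0 \in Fs (lastst s1 h).
Proof. by have := @rule_free s1 h set0; rewrite GampS_set0 setD0; apply. Qed.

Lemma alg_strategy_is_strategy : is_strategy F rho alg_strategy.
Proof.
move=> s1 h _ nonempty; rewrite /alg_strategy; case: replay => k I.
rewrite /round_choice /new_round; case: ifP => [_|/negbT]; first exact: rule_set0_mem.
by rewrite negb_or => /andP[_ /rule_free]; rewrite in_setD => /andP[].
Qed.

Lemma reach_walk s1 h k I b : reach s1 h k I b -> walk_from s1 h.
Proof.
elim=> // s0 h0 k0 I0 b0 f s' _ walk_h0 => [_ nonempty|_ free] -> rho_pos;
  rewrite walk_from_rcons walk_h0 [_ \in supp _ _ _]inE rho_pos andbT /=.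
  exact: rule_set0_mem.
by move: (rule_free free); rewrite in_setD => /andP[].
Qed.

Lemma reach_chain_bound s1 h k I b : reach s1 h k I b -> chain_bound (word h) k I.
Proof.
elim=> [_ _|s0 h0 k0 I0 b0 f s' _ bound _ _ _ _|s0 h0 k0 I0 b0 f s' _ bound k0_gt0 free -> _].
- exact: chain_bound_nil.
- by rewrite word_rcons; exact: chain_bound_new bound.
- rewrite word_rcons; move: (rule_free free); rewrite in_setD inE => /and3P[fNI fF _].
  exact: chain_bound_inner bound k0_gt0 fF fNI.
Qed.

Lemma reach_chain_witness s1 h k I b :
  reach s1 h k I b -> chain_witness (word h) (lastst s1 h) k I.
Proof.
elim=> [s0 _|s0 h0 k0 I0 b0 f s' _ witness new nonempty -> rho_pos|
    s0 h0 k0 I0 b0 f s' _ witness _ free -> rho_pos];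
  rewrite ?word_rcons ?lastst_rcons /=; first exact: chain_witness_nil.
- have fF := rule_set0_mem nonempty.
  by apply: (chain_witness_new witness new fF); apply: Fs_step fF _; rewrite inE.
- have fFI := rule_free free; have fF : rule s0 h0 I0 \in Fs (lastst s0 h0).
    by move: fFI; rewrite in_setD => /andP[].
  by apply: (chain_witness_inner witness fFI); apply: Fs_step fF _; rewrite inE.
Qed.

End Algorithm2.

Theorem proposition4 (Omega : finType) (F : {set {set Omega}})
  (R : realFieldType) (rho : {set Omega} -> Omega -> Omega -> R)
  (omega : Omega -> R) (sim : rel {set Omega})
  (rule : Omega -> seq ({set Omega} * Omega) -> {set {set Omega}} -> {set Omega})
  (s : nat) :
  (* flaws are nonempty *)
  (forall f, f \in F -> f != set0) ->
  (* rho(. | f, sigma) is a probability distribution for f in F_sigma *)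
  (forall sigma f, f \in Fs F sigma ->
     (forall s', 0 <= rho f sigma s') /\ \sum_(s' : Omega) rho f sigma s' = 1) ->
  (* initial distribution *)
  (forall sigma, 0 <= omega sigma) -> \sum_(sigma : Omega) omega sigma = 1 ->
  (* ~ is symmetric on F *)
  {in F &, forall f g, sim f g = sim g f} ->
  (* F_sigma' \subseteq (F_sigma \ {f}) u Gamma(f) for every step *)
  (forall sigma f s', f \in Fs F sigma -> s' \in supp rho f sigma ->
     Fs F s' \subset (Fs F sigma :\ f) :|: Gam F sim f) ->
  (* the deterministic rule picks f in F_sigma \ Gamma^+(I) *)
  (forall s1 h I,
     Fs F (lastst s1 h) :\: GampS F sim I != set0 ->
     rule s1 h I \in Fs F (lastst s1 h) :\: GampS F sim I) ->
  (1 <= s)%N ->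
  (forall tau, BadPar F sim rho omega rule s tau -> longest_chain_len sim tau.2 s)
  /\ valid F rho (BadPar F sim rho omega rule s).
Proof.
move=> _ _ _ _ _ Fs_step rule_free s_gt0; split.
  move=> [s1 h] [I /= reachI]; split.
    have /set0Pn[g gI] := reach_set_neq0 reachI s_gt0.
    have [u chain size_u] := (reach_chain_witness Fs_step rule_free reachI).1 g gI.
    by exists (rcons u g); rewrite size_rcons size_u prednK.
  move=> u [uh chain]; case/lastP: u uh chain => [//|u g] uh chain.
  by case: (reach_chain_bound rule_free reachI uh chain); rewrite size_rcons.
exists (alg_strategy F sim rule); split; first exact: alg_strategy_is_strategy.
split=> [[s1 h] [I /= reachI]|[s1 h1] [s2 h2] [I1 /= reach1] [I2 /= reach2] /= eq_s].
  by split; [apply: reach_walk reachI | apply: reach_follows reachI].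
case/prefixP=> h' eq_h2; move: reach2; rewrite -eq_s eq_h2.
by move=> /(reach_first_step_prefix reach1)->; rewrite cats0.
Qed.
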